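(* For all $n$ and $m$, top-half approval is a $\frac{1}{3}$-expected-welfare-maximizing rule for every symmetric distribution $\mathcal{D}$ supported on $[0,1]$; that is, for every such $\mathcal{D}$ and every preference profile $\sigma$ on $n$ voters and $m$ alternatives, the alternative $f(\sigma)$ selected by top-half approval satisfies $\mathbb{E}[\mathrm{sw}(f(\sigma),u)]\ge\frac{1}{3}\max_{j\in A}\mathbb{E}[\mathrm{sw}(j,u)]$.
   Context: There are $n$ voters and $m$ alternatives $A=\{1,\dots,m\}$. A preference profile $\sigma$ consists of a ranking of $A$ for each voter. Given a distribution $\mathcal{D}$ and profile $\sigma$, a random utility profile $u$ consistent with $\sigma$ is generated as follows: independently for each voter $i$, draw $m$ i.i.d. samples from $\mathcal{D}$ and assign them, from highest to lowest, to the alternatives in the order of voter $i$'s ranking. The social welfare of $j$ is $\mathrm{sw}(j,u)=\sum_i u_{ij}$; expectations are over $u$. A distribution $\mathcal{D}$ on $[0,1]$ is symmetric if $\Pr_{x\sim\mathcal{D}}(x\le\frac12-\epsilon)=\Pr_{x\sim\mathcal{D}}(x\ge\frac12+\epsilon)$ for all $\epsilon\in[0,\frac12]$. Top-half approval is the scoring rule in which each voter gives $1$ point to each alternative in her top $\lceil m/2\rceil$ positions and $0$ to all others; it selects an alternative with the largest total score (ties broken arbitrarily). *)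

From HB Require Import structures.
From mathcomp Require Import all_boot all_order all_algebra all_fingroup.
From mathcomp Require Import all_classical all_reals all_analysis.
Set Implicit Arguments. Unset Strict Implicit. Unset Printing Implicit Defensive.
Import Order.TTheory GRing.Theory Num.Theory.
Local Open Scope classical_set_scope.
Local Open Scope ring_scope.

(* A preference profile on n voters and m alternatives (alternatives are 'I_m):
   for voter i, [prof i] is a bijection from alternatives to positions,
   [prof i j] = position of alternative j in voter i's ranking (0 = top). *)
Definition profile (n m : nat) := 'I_n -> {perm 'I_m}.

Definition supported01 (R : realType) (D : probability R R) : Prop :=
  D [set x : R | 0 <= x <= 1] = 1%E.

Definition symmetric_distr (R : realType) (D : probability R R) : Prop :=
  forall eps : R, 0 <= eps <= 2^-1 ->
    D [set x | x <= 2^-1 - eps] = D [set x | 2^-1 + eps <= x].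

(* Expectation of f(x_0, ..., x_{k-1}) where x_0, ..., x_{k-1} are i.i.d.
   samples from D (iterated integral over k independent copies of D). *)
Fixpoint iid_expect (R : realType) (D : probability R R) (k : nat)
    (f : seq R -> \bar R) : \bar R :=
  match k with
  | 0 => f [::]
  | k'.+1 => (\int[D]_x iid_expect D k' (fun s => f (x :: s)))%E
  end.

(* The n*m samples are stored in a sequence s; voter i's m samples are
   s_{i*m}, ..., s_{i*m+m-1}.  They are sorted from highest to lowest and
   assigned to the alternatives in the order of voter i's ranking:
   the utility of j for voter i is the (prof i j)-th largest of her samples. *)
Definition voter_samples (R : realType) (m : nat) (s : seq R) (i : nat) : seq R :=
  [seq nth 0 s (i * m + k) | k <- iota 0 m].

Definition utility (R : realType) (n m : nat) (prof : profile n m)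
    (s : seq R) (i : 'I_n) (j : 'I_m) : R :=
  nth 0 (sort (fun x y : R => y <= x) (voter_samples m s i)) (prof i j).

Definition sw (R : realType) (n m : nat) (prof : profile n m)
    (j : 'I_m) (s : seq R) : R :=
  \sum_(i < n) utility prof s i j.

Definition exp_sw (R : realType) (D : probability R R) (n m : nat)
    (prof : profile n m) (j : 'I_m) : \bar R :=
  iid_expect D (n * m) (fun s => (sw prof j s)%:E).

Definition top_half_score (n m : nat) (prof : profile n m) (j : 'I_m) : nat :=
  #|[set i : 'I_n | (prof i j < uphalf m)%N]|.

(* j is a possible output of top-half approval (ties broken arbitrarily). *)
Definition top_half_winner (n m : nat) (prof : profile n m) (j : 'I_m) : Prop :=
  forall j' : 'I_m, (top_half_score prof j' <= top_half_score prof j)%N.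

From HB Require Import structures.
From mathcomp Require Import all_boot all_order all_algebra all_fingroup.
From mathcomp Require Import all_classical all_reals all_analysis.
From mathcomp Require Import measurable_realfun.
From mathcomp Require Import ring lra zify.
Set Implicit Arguments. Unset Strict Implicit. Unset Printing Implicit Defensive.
Import Order.TTheory GRing.Theory Num.Theory.
Local Open Scope classical_set_scope.
Local Open Scope ring_scope.

(* Write mu_p for the expected p-th largest (counting from 0) of a voter's m
   samples.  Order statistics are coordinatewise nondecreasing functions of
   the samples, so mu is nonincreasing in p; and the reflection x |-> 1 - x
   preserves D while exchanging the p-th largest sample with one minus the
   (m-1-p)-th largest, so mu_(m-1-p) = 1 - mu_p.  Hence a top-half position
   is worth at least 1/2 and any other position at most 1/2, which gives
   E[sw j] <= (n + s_j) / 2 and E[sw w] >= s_w / 2 for the top-half scores s.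
   The scores add up to n * ceil(m/2) >= n * m / 2, so the winner has
   s_w >= n / 2, whence n + s_j <= 3 s_w. *)

Local Notation I01 := [set x | 0 <= x <= 1].

Section RealLine.
Context {R : realType}.

Definition reflect01 (x : R) : R := 1 - x.

Lemma measurable_reflect01 : measurable_fun setT reflect01.
Proof. exact: measurable_funB. Qed.

Lemma measurable_I01 : measurable (I01 : set R).
Proof. by rewrite -set_itvcc; exact: measurable_itv. Qed.

Lemma measurable_ray_ge (x : R) : measurable [set y : R | x <= y].
Proof. by rewrite -set_itvcy; exact: measurable_itv. Qed.

Lemma measurable_ray_le (x : R) : measurable [set y : R | y <= x].
Proof. by rewrite -set_itvNyc; exact: measurable_itv. Qed.

Lemma measurable_ray_gt (x : R) : measurable [set y : R | x < y].
Proof. by rewrite -set_itvoy; exact: measurable_itv. Qed.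

Lemma measurable_ray_lt (x : R) : measurable [set y : R | y < x].
Proof. by rewrite -set_itvNyo; exact: measurable_itv. Qed.

Lemma ray_lt_bigcup (x : R) :
  [set y | y < x] = \bigcup_k [set y | y <= x - k.+1%:R^-1].
Proof.
apply/seteqP; split => y /=.
  by move=> /ltr_add_invr[k hk]; exists k => //=; rewrite lerBrDr ltW.
move=> [k _ /= /le_lt_trans]; apply.
by rewrite ltrBlDr ltrDl invr_gt0 ltr0n.
Qed.

Lemma ray_gt_bigcup (x : R) :
  [set y | x < y] = \bigcup_k [set y | x + k.+1%:R^-1 <= y].
Proof.
apply/seteqP; split => y /=.
  by move=> /ltr_add_invr[k hk]; exists k => //=; rewrite ltW.
move=> [k _ /=]; apply: lt_le_trans.
by rewrite ltrDl invr_gt0 ltr0n.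
Qed.

Lemma nondecreasing_ray_lt (x : R) :
  nondecreasing_seq (fun k : nat => [set y | y <= x - k.+1%:R^-1]).
Proof.
move=> a b ab; apply/subsetPset => y /= /le_trans; apply.
by rewrite lerD2l lerN2 lef_pV2 ?posrE ?ltr0n // ler_nat.
Qed.

Lemma nondecreasing_ray_gt (x : R) :
  nondecreasing_seq (fun k : nat => [set y | x + k.+1%:R^-1 <= y]).
Proof.
move=> a b ab; apply/subsetPset => y /=; apply: le_trans.
by rewrite lerD2l lef_pV2 ?posrE ?ltr0n // ler_nat.
Qed.

Lemma nondecreasing_bounded01 (h : R -> R) : nondecreasing_fun h ->
  exists B, forall x, I01 x -> `|h x| <= B.
Proof.
move=> hnd; exists (`|h 0| + `|h 1|) => x /andP[x0 x1].
have := hnd _ _ x0; have := hnd _ _ x1.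
have := ler_norm (h 0); have := ler_norm (- h 0); rewrite normrN.
have := ler_norm (h 1); have := ler_norm (- h 1); rewrite normrN.
by rewrite ler_norml; lra.
Qed.

End RealLine.

Section SymmetricDistribution.
Context {R : realType} (D : probability R R).
Hypotheses (hsupp : supported01 D) (hsym : symmetric_distr D).

Lemma supported01_setC : D (~` I01) = 0%E.
Proof. by rewrite probability_setC ?hsupp ?subee //; exact: measurable_I01. Qed.

Lemma supported01_null (A : set R) : measurable A -> A `<=` ~` I01 -> D A = 0%E.
Proof.
move=> mA AI; apply: subset_measure0 AI _ => //.
  by apply: measurableC; exact: measurable_I01.
exact: supported01_setC.
Qed.

Lemma symmetric_ray_ge_half (x : R) : 2^-1 <= x ->
  D [set y | x <= y] = D [set y | y <= 1 - x].
Proof.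
move=> hx; have [x1|x1] := leP x 1.
  have := @hsym (x - 2^-1).
  rewrite (_ : 2^-1 - (x - 2^-1) = 1 - x); last by field.
  rewrite (_ : 2^-1 + (x - 2^-1) = x); last by field.
  by move=> -> //; apply/andP; split; lra.
rewrite !supported01_null //; try exact: measurable_ray_le; try exact: measurable_ray_ge.
- by move=> y /= hy /andP[h0 _]; lra.
- by move=> y /= hy /andP[_ h1]; lra.
Qed.

(* Below 1/2, pass to the complementary open rays and approximate them from
   inside by closed rays beyond 1/2. *)
Lemma symmetric_ray (x : R) : D [set y | x <= y] = D [set y | y <= 1 - x].
Proof.
have [hx|hx] := leP (2^-1) x; first exact: symmetric_ray_ge_half.
have -> : [set y | x <= y] = ~` [set y | y < x].
  by apply/seteqP; split => y /=; rewrite leNgt => /negP.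
have -> : [set y | y <= 1 - x] = ~` [set y | 1 - x < y].
  by apply/seteqP; split => y /=; rewrite leNgt => /negP.
rewrite !probability_setC; [|exact: measurable_ray_gt|exact: measurable_ray_lt].
congr (1 - _)%E; rewrite ray_lt_bigcup ray_gt_bigcup.
have lim_bigcup (F : (set R)^nat) : (forall k, measurable (F k)) ->
    nondecreasing_seq F -> D (\bigcup_k F k) = lim (D \o F @ \oo).
  move=> mF ndF; apply/esym/cvg_lim => //.
  by apply: nondecreasing_cvg_mu => //; exact: bigcupT_measurable.
rewrite (lim_bigcup _ (fun k => measurable_ray_le _) (nondecreasing_ray_lt x)).
rewrite (lim_bigcup _ (fun k => measurable_ray_ge _) (nondecreasing_ray_gt _)).
congr (limn _); apply/funext => k /=.
rewrite symmetric_ray_ge_half; last first.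
  have : 0 <= (k.+1%:R : R)^-1 by rewrite invr_ge0.
  by move: (k.+1%:R^-1 : R) => t; lra.
by rewrite (_ : 1 - (1 - x + _) = x - k.+1%:R^-1) //; ring.
Qed.

Lemma pushforward_reflect01 (A : set R) : measurable A ->
  pushforward D reflect01 A = D A.
Proof.
move=> mA; apply: esym.
pose ray k : set R := `[- k%:R, +oo[%classic.
have setI_rays : setI_closed (@RGenCInfty.G R).
  move=> _ _ [a ->] [b ->]; exists (Order.max a b).
  by apply/seteqP; split => y /=; rewrite !in_itv /= !andbT ge_max => /andP.
have rays_cover : \bigcup_k ray k = setT.
  apply/seteqP; split => y // _; exists (Num.truncn `|y|).+1 => //=.
  rewrite /ray /= in_itv /= andbT lerNl; apply: le_trans (ler_norm _) _.
  by rewrite normrN ltW // truncnS_gt.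
have rays_finite k : (D (ray k) < +oo)%E.
  apply: (@le_lt_trans _ _ 1%E); last exact: ltry.
  by apply: probability_le1; exact: measurable_itv.
refine (measure_unique _ ray (RGenCInfty.measurableE R) setI_rays
  (fun k => ex_intro _ (- k%:R) erefl) rays_cover D (pushforward D reflect01)
  _ rays_finite A mA).
- move=> _ [x ->]; rewrite /pushforward set_itvcy /= symmetric_ray //.
  by congr (D _); apply/seteqP; split => y /=; rewrite /reflect01; lra.
Unshelve. exact: measurable_reflect01.
Qed.

End SymmetricDistribution.

Section Mean.
Context {R : realType} (D : probability R R).
Hypothesis hsupp : supported01 D.

Lemma integral_I01 (f : R -> \bar R) : measurable_fun setT f ->
  (\int[D]_x f x = \int[D]_(x in I01) f x)%E.
Proof.
move=> mf; rewrite -(setUv I01) integral_setU //; last 4 first.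
- exact: measurable_I01.
- by apply: measurableC; exact: measurable_I01.
- by rewrite setUv.
- by rewrite /disj_set setICr.
rewrite (@null_set_integral _ _ _ D (~` I01)) ?adde0 //.
- by apply: measurableC; exact: measurable_I01.
- exact: measurable_funS mf.
- exact (supported01_setC hsupp).
Qed.

Lemma bounded01_integrable (h : R -> R) : measurable_fun setT h ->
  (exists B, forall x, I01 x -> `|h x| <= B) -> D.-integrable setT (EFin \o h).
Proof.
move=> mh [B hB]; apply/integrableP; split; first exact/measurable_EFinP.
have mabs : measurable_fun setT (fun x => `|(h x)%:E|%E).
  by apply/measurable_EFinP; exact: measurableT_comp.
rewrite integral_I01 //; apply: (@le_lt_trans _ _ (\int[D]_(x in I01) B%:E)%E).
  apply: ge0_le_integral => //; first exact: measurable_I01.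
  exact: measurable_funS mabs.
have D01 : (D : measure R R) I01 = 1%E := hsupp.
by rewrite integral_cst ?D01 ?mule1 ?ltry //; exact: measurable_I01.
Qed.

Lemma nondecreasing_integrable (h : R -> R) : nondecreasing_fun h ->
  D.-integrable setT (EFin \o h).
Proof.
move=> hnd; apply: bounded01_integrable; last exact: nondecreasing_bounded01.
exact: nondecreasing_measurable.
Qed.

Lemma nondecreasing_reflect01_integrable (h : R -> R) : nondecreasing_fun h ->
  D.-integrable setT (EFin \o (h \o reflect01)).
Proof.
move=> hnd; apply: bounded01_integrable.
  apply: measurableT_comp; last exact: measurable_reflect01.
  exact: nondecreasing_measurable.
have [B hB] := nondecreasing_bounded01 hnd.
by exists B => x /andP[x0 x1]; apply: hB; rewrite /reflect01; apply/andP; split; lra.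
Qed.

Lemma cst_integrable (c : R) : D.-integrable setT (EFin \o (fun _ => c)).
Proof. by apply: bounded01_integrable => //; exists `|c|. Qed.

Definition mean (h : R -> R) : R := fine (\int[D]_x (h x)%:E).

Lemma meanE (h : R -> R) : D.-integrable setT (EFin \o h) ->
  (\int[D]_x (h x)%:E)%E = (mean h)%:E.
Proof. by move=> ih; rewrite fineK //; exact: integrable_fin_num ih. Qed.

Lemma le_mean (h1 h2 : R -> R) :
  D.-integrable setT (EFin \o h1) -> D.-integrable setT (EFin \o h2) ->
  (forall x, I01 x -> h1 x <= h2 x) -> mean h1 <= mean h2.
Proof.
move=> i1 i2 h12; rewrite -lee_fin -!meanE //.
rewrite (integral_I01 (measurable_int _ i1)) (integral_I01 (measurable_int _ i2)).
apply: le_integral; first exact: measurable_I01.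
- by apply: integrableS i1 => //; exact: measurable_I01.
- by apply: integrableS i2 => //; exact: measurable_I01.
- by move=> x /set_mem Ix /=; rewrite lee_fin h12.
Qed.

Lemma meanD (h1 h2 : R -> R) :
  D.-integrable setT (EFin \o h1) -> D.-integrable setT (EFin \o h2) ->
  mean (fun x => h1 x + h2 x) = mean h1 + mean h2.
Proof.
move=> i1 i2; rewrite /mean; under eq_integral do rewrite EFinD.
by rewrite integralD // fineD //; exact: integrable_fin_num.
Qed.

Lemma meanB (h1 h2 : R -> R) :
  D.-integrable setT (EFin \o h1) -> D.-integrable setT (EFin \o h2) ->
  mean (fun x => h1 x - h2 x) = mean h1 - mean h2.
Proof.
move=> i1 i2; rewrite /mean; under eq_integral do rewrite EFinB.
by rewrite integralB // fineB //; exact: integrable_fin_num.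
Qed.

Lemma mean_cst (c : R) : mean (fun _ => c) = c.
Proof.
have D1 : (D : measure R R) setT = 1%E := probability_setT D.
by rewrite /mean integral_cst // D1 mule1.
Qed.

Hypothesis hsym : symmetric_distr D.

Lemma integral_reflect01 (f : R -> \bar R) : measurable_fun setT f ->
  D.-integrable setT (f \o reflect01) ->
  (\int[D]_x f (reflect01 x) = \int[D]_x f x)%E.
Proof.
move=> mf intf.
have := integral_pushforward measurable_reflect01 mf intf measurableT.
rewrite preimage_setT => <-; apply: eq_measure_integral.
  exact: measurable_reflect01.
by move=> mr A mA _; exact: pushforward_reflect01.
Qed.

Lemma mean_reflect01 (h : R -> R) : nondecreasing_fun h ->
  mean (h \o reflect01) = mean h.
Proof.
move=> hnd; congr fine; apply: (integral_reflect01 (f := EFin \o h)).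
  by apply/measurable_EFinP; exact: nondecreasing_measurable.
exact: nondecreasing_reflect01_integrable.
Qed.

End Mean.

Section NondecreasingSeqfun.
Context {R : realType}.

Definition seq_le (s t : seq R) := forall i, nth 0 s i <= nth 0 t i.

Definition nondecreasing_seqfun (k : nat) (g : seq R -> R) :=
  forall s t, size s = k -> size t = k -> seq_le s t -> g s <= g t.

Lemma nondecreasing_seqfun_cons k g x : nondecreasing_seqfun k.+1 g ->
  nondecreasing_seqfun k (fun s => g (x :: s)).
Proof. by move=> hg s t hs ht st; apply: hg => /=; [rewrite hs|rewrite ht|case]. Qed.

Lemma nondecreasing_seqfun_head k g x y s : nondecreasing_seqfun k.+1 g ->
  size s = k -> x <= y -> g (x :: s) <= g (y :: s).
Proof. by move=> hg hs xy; apply: hg => /=; [rewrite hs|rewrite hs|case]. Qed.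

Lemma nondecreasing_seqfunD k g1 g2 :
  nondecreasing_seqfun k g1 -> nondecreasing_seqfun k g2 ->
  nondecreasing_seqfun k (fun s => g1 s + g2 s).
Proof. by move=> h1 h2 s t hs ht st; apply: lerD; [exact: h1|exact: h2]. Qed.

Lemma nondecreasing_seqfun_sum k (I : Type) (r : seq I) (F : I -> seq R -> R) :
  (forall i, nondecreasing_seqfun k (F i)) ->
  nondecreasing_seqfun k (fun s => \sum_(i <- r) F i s).
Proof. by move=> hF s t hs ht st; apply: ler_sum => i _; exact: hF. Qed.

Lemma nondecreasing_seqfun_reflect01 k c g : nondecreasing_seqfun k g ->
  nondecreasing_seqfun k (fun s => c - g (map reflect01 s)).
Proof.
move=> hg s t hs ht st; rewrite lerD2l lerN2; apply: hg; rewrite ?size_map //.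
move=> i; have [ik|ik] := ltnP i k; last by rewrite !nth_default ?size_map ?hs ?ht.
by rewrite !(nth_map 0) ?hs ?ht // lerD2l lerN2.
Qed.

End NondecreasingSeqfun.

Section IidMean.
Context {R : realType} (D : probability R R).
Hypothesis hsupp : supported01 D.

Definition iid_mean (k : nat) (g : seq R -> R) : R :=
  fine (iid_expect D k (fun s => (g s)%:E)).

(* Integrating out all but the first sample of a nondecreasing integrand
   leaves a nondecreasing, hence measurable and on [0, 1] bounded, function of
   that sample; this is what keeps all the iterated integrals finite. *)
Lemma iid_mean_spec k :
  (forall g, nondecreasing_seqfun k g ->
     iid_expect D k (fun s => (g s)%:E) = (iid_mean k g)%:E) /\
  (forall g1 g2, nondecreasing_seqfun k g1 -> nondecreasing_seqfun k g2 ->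
     (forall s, size s = k -> all (mem I01) s -> g1 s <= g2 s) ->
     iid_mean k g1 <= iid_mean k g2).
Proof.
elim: k => [|k [IHexpect IHle]]; first by split=> [//|g1 g2 _ _]; apply.
have head_nd g : nondecreasing_seqfun k.+1 g ->
    nondecreasing_fun (fun x => iid_mean k (fun s => g (x :: s))).
  move=> hg x y xy; apply: IHle; try exact: nondecreasing_seqfun_cons.
  by move=> s hs _ /=; apply: (nondecreasing_seqfun_head hg hs xy).
have expectS g : nondecreasing_seqfun k.+1 g ->
    iid_expect D k.+1 (fun s => (g s)%:E) =
    (mean D (fun x => iid_mean k (fun s => g (x :: s))))%:E.
  move=> hg; rewrite -meanE; last first.
    by apply: nondecreasing_integrable => //; exact: head_nd.
  by apply: eq_integral => x _; apply: IHexpect; exact: nondecreasing_seqfun_cons.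
split=> [g hg|g1 g2 hg1 hg2 g12]; first by rewrite /iid_mean expectS.
rewrite /iid_mean !expectS //=; apply: le_mean => //.
- by apply: nondecreasing_integrable => //; exact: head_nd.
- by apply: nondecreasing_integrable => //; exact: head_nd.
move=> x Ix; apply: IHle; try exact: nondecreasing_seqfun_cons.
by move=> s hs s01; apply: g12 => /=; rewrite ?hs // s01 andbT; exact/mem_set.
Qed.

Lemma iid_expectE k g : nondecreasing_seqfun k g ->
  iid_expect D k (fun s => (g s)%:E) = (iid_mean k g)%:E.
Proof. exact: (iid_mean_spec k).1. Qed.

Lemma le_iid_mean k g1 g2 :
  nondecreasing_seqfun k g1 -> nondecreasing_seqfun k g2 ->
  (forall s, size s = k -> all (mem I01) s -> g1 s <= g2 s) ->
  iid_mean k g1 <= iid_mean k g2.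
Proof. exact: (iid_mean_spec k).2. Qed.

Lemma nondecreasing_iid_mean_head k g : nondecreasing_seqfun k.+1 g ->
  nondecreasing_fun (fun x => iid_mean k (fun s => g (x :: s))).
Proof.
move=> hg x y xy; apply: le_iid_mean; try exact: nondecreasing_seqfun_cons.
by move=> s hs _ /=; apply: (nondecreasing_seqfun_head hg hs xy).
Qed.

Lemma iid_meanS k g : nondecreasing_seqfun k.+1 g ->
  iid_mean k.+1 g = mean D (fun x => iid_mean k (fun s => g (x :: s))).
Proof.
move=> hg; rewrite {1}/iid_mean /mean /=; congr fine.
by apply: eq_integral => x _; apply: iid_expectE; exact: nondecreasing_seqfun_cons.
Qed.

Lemma eq_iid_expect k f1 f2 : (forall s, size s = k -> f1 s = f2 s) ->
  iid_expect D k f1 = iid_expect D k f2.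
Proof.
elim: k f1 f2 => [|k IH] f1 f2 f12 /=; first exact: f12.
by apply: eq_integral => x _; apply: IH => s hs; rewrite f12 //= hs.
Qed.

Lemma eq_iid_mean k g1 g2 : (forall s, size s = k -> g1 s = g2 s) ->
  iid_mean k g1 = iid_mean k g2.
Proof. by move=> g12; congr fine; apply: eq_iid_expect => s /g12 ->. Qed.

Lemma iid_mean_cst k c : iid_mean k (fun _ => c) = c.
Proof.
elim: k => [//|k IH]; rewrite iid_meanS //.
by under eq_fun do rewrite IH; exact: mean_cst.
Qed.

Lemma iid_meanD k g1 g2 :
  nondecreasing_seqfun k g1 -> nondecreasing_seqfun k g2 ->
  iid_mean k (fun s => g1 s + g2 s) = iid_mean k g1 + iid_mean k g2.
Proof.
elim: k g1 g2 => [//|k IH] g1 g2 h1 h2.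
rewrite !iid_meanS //; last exact: nondecreasing_seqfunD.
rewrite -meanD //; try exact/nondecreasing_integrable/nondecreasing_iid_mean_head.
by congr mean; apply/funext => x; apply: IH; exact: nondecreasing_seqfun_cons.
Qed.

Lemma iid_mean_sum k (I : Type) (r : seq I) (F : I -> seq R -> R) :
  (forall i, nondecreasing_seqfun k (F i)) ->
  iid_mean k (fun s => \sum_(i <- r) F i s) = \sum_(i <- r) iid_mean k (F i).
Proof.
move=> hF; elim: r => [|i r IH].
  by under eq_fun do rewrite big_nil; rewrite big_nil iid_mean_cst.
under eq_fun do rewrite big_cons; rewrite big_cons -IH iid_meanD //.
exact: nondecreasing_seqfun_sum.
Qed.

Hypothesis hsym : symmetric_distr D.

(* The constant c keeps the integrand nondecreasing. *)
Lemma iid_mean_reflect01 k c g : nondecreasing_seqfun k g ->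
  iid_mean k (fun s => c - g (map reflect01 s)) = c - iid_mean k g.
Proof.
elim: k c g => [//|k IH] c g hg.
rewrite !iid_meanS //; last exact: nondecreasing_seqfun_reflect01.
have hnd := nondecreasing_iid_mean_head hg.
rewrite -[in RHS](mean_reflect01 hsupp hsym hnd) -[in RHS](mean_cst D c) -meanB //.
- by congr mean; apply/funext => x /=; rewrite -IH //; exact: nondecreasing_seqfun_cons.
- exact: cst_integrable.
- exact: nondecreasing_reflect01_integrable.
Qed.

End IidMean.

Section SortGe.
Context {R : realType}.
Local Notation sort_ge := (sort (fun x y : R => y <= x)).

Let sorted_sort_ge (u : seq R) : sorted (fun x y : R => y <= x) (sort_ge u).
Proof. exact: (sort_sorted (@ge_total _ R) u). Qed.

Lemma nth_sort_ge_antitone (u : seq R) p q : (p <= q)%N -> (q < size u)%N ->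
  nth 0 (sort_ge u) q <= nth 0 (sort_ge u) p.
Proof.
move=> pq qu.
apply: (sorted_leq_nth (@ge_trans _ R) (@ge_refl _ R) 0 (sorted_sort_ge u)) => //.
  by rewrite inE size_sort (leq_ltn_trans pq).
by rewrite inE size_sort.
Qed.

Lemma le_nth_sort_ge (u : seq R) p a : (p < size u)%N ->
  (a <= nth 0 (sort_ge u) p) = (p < count (>= a) u)%N.
Proof.
move=> pu; have /seq.permP <- : perm_eq (sort_ge u) u by rewrite perm_sort.
set t := sort_ge u; have tsize : size t = size u by rewrite size_sort.
apply/idP/idP => [apt|].
  have : count (>= a) (take p.+1 t) = p.+1.
    rewrite -[RHS](size_takel (n0 := p.+1) (s := t)) ?tsize //; apply/eqP.
    rewrite -all_count; apply/(all_nthP 0) => q; rewrite size_takel ?tsize // => qp.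
    by rewrite nth_take //=; apply: le_trans apt (nth_sort_ge_antitone _ _).
  by move=> take_count; rewrite -(cat_take_drop p.+1 t) count_cat take_count leq_addr.
apply: contraLR; rewrite -ltNge => tpa.
have : count (>= a) (drop p t) = 0%N.
  apply/eqP; rewrite -leqn0 leqNgt -has_count; apply/(has_nthP 0) => -[q].
  rewrite size_drop tsize ltn_subRL => qu; rewrite nth_drop; apply/negP.
  by rewrite -ltNge; exact: le_lt_trans (nth_sort_ge_antitone (leq_addr _ _) qu) tpa.
move=> drop_count; rewrite -(cat_take_drop p t) count_cat drop_count addn0 -leqNgt.
apply: leq_trans (count_size _ _) _; rewrite size_take.
by case: ifP => // /negbT; rewrite -leqNgt.
Qed.

Lemma count_le_seq_le (P : pred R) (u v : seq R) :
  {homo P : x y / x <= y >-> (x ==> y)} -> size u = size v -> seq_le u v ->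
  (count P u <= count P v)%N.
Proof.
move=> Pmono; elim: u v => [|x u IH] [|y v] //= [uv] le_uv.
apply: leq_add; last by apply: IH => // i; exact: (le_uv i.+1).
by have := Pmono _ _ (le_uv 0%N); case: (P x); case: (P y).
Qed.

Lemma nth_sort_ge_mono (u v : seq R) p : size u = size v -> seq_le u v ->
  nth 0 (sort_ge u) p <= nth 0 (sort_ge v) p.
Proof.
move=> uv le_uv; have [pu|up] := ltnP p (size u); last first.
  by rewrite !nth_default ?size_sort -?uv.
rewrite le_nth_sort_ge -?uv //; apply: leq_trans (count_le_seq_le _ uv le_uv).
  by rewrite -le_nth_sort_ge.
by move=> x y xy; apply/implyP => /le_trans; apply.
Qed.

Lemma sort_ge_reflect01 (u : seq R) :
  sort_ge (map reflect01 u) = map reflect01 (rev (sort_ge u)).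
Proof.
apply: (sorted_eq (@ge_trans _ R) (@ge_anti _ R)); first exact: sorted_sort_ge.
  rewrite sorted_map (@eq_sorted _ _ (fun x y : R => x <= y)); last first.
    by move=> x y; rewrite /= /reflect01 lerD2l lerN2.
  by rewrite rev_sorted; exact: sorted_sort_ge.
by rewrite perm_sort perm_sym perm_map // perm_rev perm_sort.
Qed.

Lemma nth_sort_ge_reflect01 (u : seq R) p : (p < size u)%N ->
  nth 0 (sort_ge (map reflect01 u)) p = 1 - nth 0 (sort_ge u) (size u - p.+1).
Proof.
move=> pu; rewrite sort_ge_reflect01 (nth_map 0); last by rewrite size_rev size_sort.
by rewrite nth_rev size_sort.
Qed.

Lemma nth_sort_ge_in01 (u : seq R) p : all (mem I01) u -> (p < size u)%N ->
  0 <= nth 0 (sort_ge u) p <= 1.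
Proof.
move=> /allP u01 pu; have := u01 (nth 0 (sort_ge u) p); rewrite inE; apply.
by rewrite -(mem_sort (fun x y : R => y <= x)) mem_nth // size_sort.
Qed.

End SortGe.

Definition order_stat {R : realType} (m i p : nat) (s : seq R) : R :=
  nth 0 (sort (fun x y : R => y <= x) (voter_samples m s i)) p.

Lemma size_voter_samples {R : realType} m (s : seq R) i :
  size (voter_samples m s i) = m.
Proof. by rewrite size_map size_iota. Qed.

Lemma nth_voter_samples {R : realType} m (s : seq R) i k : (k < m)%N ->
  nth 0 (voter_samples m s i) k = nth 0 s (i * m + k).
Proof. by move=> km; rewrite (nth_map 0) ?size_iota // nth_iota. Qed.

Lemma voter_sample_index_lt n m i k : (i < n)%N -> (k < m)%N ->
  (i * m + k < n * m)%N.
Proof. by move=> ilt klt; nia. Qed.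

Lemma voter_samples_reflect01 {R : realType} n m (s : seq R) i :
  (i < n)%N -> size s = (n * m)%N ->
  voter_samples m (map reflect01 s) i = map reflect01 (voter_samples m s i).
Proof.
move=> ilt hs; rewrite -map_comp; apply/eq_in_map => k.
by rewrite mem_iota => /andP[_ klt] /=; rewrite (nth_map 0) // hs voter_sample_index_lt.
Qed.

Lemma nondecreasing_order_stat {R : realType} k m i p :
  nondecreasing_seqfun k (@order_stat R m i p).
Proof.
move=> s t _ _ st; apply: nth_sort_ge_mono; first by rewrite !size_voter_samples.
move=> q; have [qm|mq] := ltnP q m; last by rewrite !nth_default ?size_voter_samples.
by rewrite !nth_voter_samples.
Qed.

Section ExpectedOrderStat.
Context {R : realType} (D : probability R R).
Hypotheses (hsupp : supported01 D) (hsym : symmetric_distr D).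
Variables n m : nat.

Definition expected_order_stat i p := iid_mean D (n * m) (@order_stat R m i p).

Lemma expected_order_stat_reflect01 i p : (i < n)%N -> (p < m)%N ->
  expected_order_stat i (m - p.+1) = 1 - expected_order_stat i p.
Proof.
move=> ilt plt; rewrite /expected_order_stat -iid_mean_reflect01 //; last first.
  exact: nondecreasing_order_stat.
apply: eq_iid_mean => s hs; rewrite /order_stat (voter_samples_reflect01 ilt hs).
by rewrite nth_sort_ge_reflect01 ?size_voter_samples // opprB addrC subrK.
Qed.

Lemma expected_order_stat_in01 i p : (i < n)%N -> (p < m)%N ->
  0 <= expected_order_stat i p <= 1.
Proof.
move=> ilt plt.
have stat01 (s : seq R) : size s = (n * m)%N -> all (mem I01) s ->
    0 <= order_stat m i p s <= 1.
  move=> hs /allP s01; apply: nth_sort_ge_in01; last by rewrite size_voter_samples.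
  apply/allP => x /mapP[k]; rewrite mem_iota => /andP[_ klt] ->; apply: s01.
  by rewrite mem_nth // hs voter_sample_index_lt.
apply/andP; split.
- rewrite -(iid_mean_cst hsupp (n * m) 0).
  apply: le_iid_mean => //; first exact: nondecreasing_order_stat.
  by move=> s hs /(stat01 s hs)/andP[].
- rewrite -(iid_mean_cst hsupp (n * m) 1).
  apply: le_iid_mean => //; first exact: nondecreasing_order_stat.
  by move=> s hs /(stat01 s hs)/andP[].
Qed.

Lemma expected_order_stat_antitone i p q : (p <= q)%N -> (q < m)%N ->
  expected_order_stat i q <= expected_order_stat i p.
Proof.
move=> pq qm; apply: le_iid_mean => //; try exact: nondecreasing_order_stat.
by move=> s _ _; apply: nth_sort_ge_antitone; rewrite ?size_voter_samples.
Qed.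

Lemma expected_order_stat_top i p : (i < n)%N -> (p < uphalf m)%N ->
  2^-1 <= expected_order_stat i p.
Proof.
move=> ilt; rewrite gtn_uphalf_double -muln2 => p2m.
have := @expected_order_stat_antitone i p (m - p.+1) ltac:(lia) ltac:(lia).
by rewrite expected_order_stat_reflect01 //; [lra|lia].
Qed.

Lemma expected_order_stat_bottom i p : (i < n)%N -> (uphalf m <= p)%N ->
  (p < m)%N -> expected_order_stat i p <= 2^-1.
Proof.
move=> ilt; rewrite leqNgt gtn_uphalf_double -muln2 => m2p pm.
have := @expected_order_stat_antitone i (m - p.+1) p ltac:(lia) pm.
by rewrite expected_order_stat_reflect01 //; lra.
Qed.

End ExpectedOrderStat.

Lemma top_half_scoreE n m (prof : profile n m) j :
  top_half_score prof j = (\sum_(i < n) (prof i j < uphalf m))%N.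
Proof.
rewrite /top_half_score -sum1_card big_mkcond /=; apply: eq_bigr => i _.
have -> : (i \in [set i : 'I_n | (prof i j < uphalf m)%N]) = (prof i j < uphalf m)%N.
  by apply/idP/idP => [/set_mem|/mem_set].
by case: ltnP.
Qed.

Lemma sum_ord_lt h m : (\sum_(p < m) (p < h) = minn h m)%N.
Proof.
elim: m => [|m IH]; first by rewrite big_ord0 minn0.
rewrite big_ord_recr /= IH; case: ltnP => /= hm.
  by rewrite addn1; apply/esym/minn_idPr.
by rewrite addn0; apply/esym/minn_idPl; exact: leqW.
Qed.

Lemma uphalf_le n : (uphalf n <= n)%N.
Proof. by rewrite leq_uphalf_double -addnn leq_addr. Qed.

Lemma sum_top_half_score n m (prof : profile n m) :
  (\sum_(j < m) top_half_score prof j = n * uphalf m)%N.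
Proof.
under eq_bigr do rewrite top_half_scoreE.
rewrite exchange_big /= (eq_bigr (fun=> uphalf m)) ?sum_nat_const ?card_ord // => i _.
rewrite -[RHS](minn_idPl (uphalf_le m)) -sum_ord_lt.
by rewrite [RHS](reindex_inj (@perm_inj _ (prof i))).
Qed.

Lemma top_half_winner_score n m (prof : profile n m) w :
  top_half_winner prof w -> (n <= (top_half_score prof w).*2)%N.
Proof.
move=> hw; have m_gt0 : (0 < m)%N by exact: leq_ltn_trans (ltn_ord w).
have sum_le : (n * uphalf m <= m * top_half_score prof w)%N.
  rewrite -(sum_top_half_score prof) -[m in (m * _)%N]card_ord -sum_nat_const.
  by apply: leq_sum => j _; exact: hw.
have := uphalfK m; have := leq_b1 (odd m); nia.
Qed.

Section Welfare.
Context {R : realType} (D : probability R R).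
Hypotheses (hsupp : supported01 D) (hsym : symmetric_distr D).
Variables (n m : nat) (prof : profile n m).

Local Notation mu := (expected_order_stat D n m).

Lemma exp_swE j : exp_sw D prof j = (\sum_(i < n) mu i (prof i j))%:E.
Proof.
pose g (s : seq R) := \sum_(i < n) order_stat m i (prof i j) s.
rewrite /exp_sw (iid_expectE hsupp (g := g)).
  by rewrite iid_mean_sum // => i; exact: nondecreasing_order_stat.
by apply: nondecreasing_seqfun_sum => i; exact: nondecreasing_order_stat.
Qed.

Lemma welfare_le_score j : \sum_(i < n) mu i (prof i j) <=
  2^-1 * n%:R + 2^-1 * (top_half_score prof j)%:R.
Proof.
have -> : 2^-1 * n%:R = \sum_(i < n) (2^-1 : R).
  by rewrite sumr_const card_ord mulr_natr.
rewrite top_half_scoreE natr_sum mulr_sumr -big_split /=.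
apply: ler_sum => i _; have [top|bottom] := ltnP (prof i j) (uphalf m).
  have /andP[_ le1] := expected_order_stat_in01 hsupp (ltn_ord i) (ltn_ord (prof i j)).
  by rewrite /= mulr1; lra.
have := expected_order_stat_bottom hsupp hsym (ltn_ord i) bottom (ltn_ord (prof i j)).
by rewrite /= mulr0 addr0.
Qed.

Lemma score_le_welfare j :
  2^-1 * (top_half_score prof j)%:R <= \sum_(i < n) mu i (prof i j).
Proof.
rewrite top_half_scoreE natr_sum mulr_sumr; apply: ler_sum => i _.
have [top|bottom] := ltnP (prof i j) (uphalf m).
  by rewrite /= mulr1; exact: expected_order_stat_top.
have /andP[ge0 _] := expected_order_stat_in01 hsupp (ltn_ord i) (ltn_ord (prof i j)).
by rewrite /= mulr0.
Qed.

End Welfare.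

Theorem theorem5 (R : realType) (D : probability R R)
  (hsupp : supported01 D) (hsym : symmetric_distr D)
  (n m : nat) (prof : profile n m) (w : 'I_m) :
  top_half_winner prof w ->
  forall j : 'I_m, (((3%:R)^-1)%:E * exp_sw D prof j <= exp_sw D prof w)%E.
Proof.
move=> hw j; rewrite !exp_swE // -EFinM lee_fin.
have upper := welfare_le_score hsupp hsym prof j.
have lower := score_le_welfare hsupp hsym prof w.
have : (n + top_half_score prof j <= 3 * top_half_score prof w)%N.
  by have := hw j; have := top_half_winner_score hw; lia.
rewrite -(ler_nat R) natrD natrM => scores; lra.
Qed.
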